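(* Let $G$ be a graph with an assignment $g\colon V(G)\to\mathbb{N}$ (positive integers), and let $v\in V(G)$. Let $G':=G-v$ and let $g'\colon V(G')\to\mathbb{N}$ be such that $g'(x)=g(x)$ for every $x\in V(G)\setminus(\{v\}\cup N_G(v))$. If for some integer $q>\mathrm{HG}_{g'}(G')$ we have \[\frac{g(v)}{q}+\sum_{w\in N_G(v)}\frac{g(w)}{g'(w)+1}<1,\] then $q>\mathrm{HG}_g(G)$.
   Context: Multiple-guess hat game: for a graph $G$, an assignment $g\colon V(G)\to\mathbb{N}$ of positive integers and $q$ colours, a strategy is a family $(f_v)_{v\in V(G)}$ where $f_v\colon[q]^{N_G(v)}\to\binom{[q]}{\le g(v)}$ assigns to each colouring of the neighbourhood of $v$ a set of at most $g(v)$ colours. The strategy is winning if for every colouring $c\colon V(G)\to[q]$ there is $v\in V(G)$ with $c(v)\in f_v((c(w))_{w\in N_G(v)})$. $\mathrm{HG}_g(G)$ is the largest $q$ for which a winning strategy exists. *)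

From mathcomp Require Import all_boot all_order all_algebra.
Set Implicit Arguments. Unset Strict Implicit. Unset Printing Implicit Defensive.

(* A (finite simple) graph is a symmetric irreflexive relation e on a finType T.
   A strategy assigns to every vertex x a function f x : colourings -> {set 'I_q}
   which depends only on the colours of the neighbours of x (this is exactly a
   function [q]^{N(x)} -> subsets of [q]), with #|f x c| <= g x. *)

Definition strategy_local (T : finType) (e : rel T) (q : nat)
  (f : {ffun T -> {ffun {ffun T -> 'I_q} -> {set 'I_q}}}) : bool :=
  [forall x, forall c1 : {ffun T -> 'I_q}, forall c2 : {ffun T -> 'I_q},
     [forall w, e x w ==> (c1 w == c2 w)] ==> (f x c1 == f x c2)].

Definition strategy_bounded (T : finType) (g : T -> nat) (q : nat)
  (f : {ffun T -> {ffun {ffun T -> 'I_q} -> {set 'I_q}}}) : bool :=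
  [forall x, forall c : {ffun T -> 'I_q}, #|f x c| <= g x].

Definition strategy_wins (T : finType) (q : nat)
  (f : {ffun T -> {ffun {ffun T -> 'I_q} -> {set 'I_q}}}) : bool :=
  [forall c : {ffun T -> 'I_q}, exists x, c x \in f x c].

Definition has_winning (T : finType) (e : rel T) (g : T -> nat) (q : nat) : bool :=
  [exists f : {ffun T -> {ffun {ffun T -> 'I_q} -> {set 'I_q}}},
     [&& strategy_local e f, strategy_bounded g f & strategy_wins f]].

(* Any winning q satisfies
   q <= \sum_x g x (union bound: vertex x guesses right on a fraction <= g x / q
   of the colourings), so the maximum may be taken over q <= \sum_x g x. *)
Definition HG (T : finType) (e : rel T) (g : T -> nat) : nat :=
  \max_(q < (\sum_(x : T) g x).+1 | has_winning e g q) q.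

Notation del_vertex v := {x | x != v}.
Definition del_rel (T : finType) (e : rel T) (v : T) : rel (del_vertex v) :=
  fun x y => e (val x) (val y).
Arguments del_rel {T} e v.

From mathcomp Require Import all_boot all_order all_algebra.
Import Order.TTheory GRing.Theory Num.Theory.

(* Given a winning strategy f for (G, g) with q colours, let each vertex y of
   G - v guess those colours that f guesses at y for many of the q possible
   colours of v; this respects the bound g'.  If this
   strategy for (G - v, g') is defeated by some colouring c', consider the q
   extensions of c' to v.  Vertex v is right for at most g(v) of them, a
   vertex y outside N(v) for none, and y in N(v) for at most
   g(y) q / (g'(y) + 1) of them; by the hypothesis these add up to less than
   q, so some extension defeats f.  Hence q > HG_{g'}(G - v) forces the
   failure of every q' >= q on (G, g), i.e. q > HG_g(G). *)

Notation strategy T q := {ffun T -> {ffun {ffun T -> 'I_q} -> {set 'I_q}}}.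

Lemma card_sum_mem (S : finType) (A : {set S}) : #|A| = \sum_a (a \in A).
Proof. by rewrite -sum1_card big_mkcond. Qed.

Lemma sum_card_transpose (I S : finType) (F : I -> {set S}) :
  \sum_b #|[set i | b \in F i]| = \sum_i #|F i|.
Proof.
under eq_bigr => b _ do rewrite card_sum_mem.
rewrite exchange_big; apply: eq_bigr => i _.
by rewrite card_sum_mem; apply: eq_bigr => b _; rewrite inE.
Qed.

Lemma card_heavy_lt (I : finType) (w : I -> nat) (M k : nat) :
  0 < k -> \sum_i w i <= M -> #|[set i | M < k * w i]| < k.
Proof.
move=> k_gt0 sum_w; set S := [set i | _].
have heavy : #|S| * M.+1 <= k * M.
  rewrite -sum_nat_const; apply: leq_trans (leq_mul (leqnn k) sum_w).
  rewrite big_distrr /= [X in _ <= X](bigID (mem S)) /=.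
  by apply: leq_trans (leq_addr _ _); apply: leq_sum => i; rewrite inE.
rewrite ltnNge; apply/negP => le_kS.
move: (leq_trans (leq_mul le_kS (leqnn M.+1)) heavy).
by rewrite leq_mul2l ltnn orbF eqn0Ngt k_gt0.
Qed.

Lemma card_cover (S I : finType) (A : {set S}) (B : I -> {set S}) :
  (forall a, a \notin A -> exists i, a \in B i) -> #|S| <= #|A| + \sum_i #|B i|.
Proof.
move=> cover; rewrite -[#|S|]sum1_card card_sum_mem.
under [X in _ + X]eq_bigr => i _ do rewrite card_sum_mem.
rewrite exchange_big -big_split /=; apply: leq_sum => a _.
have [//|/cover[i ai]] := boolP (a \in A).
by rewrite (bigD1 i) //= ai addnCA leq_addr.
Qed.
Arguments card_cover {S I A B}.

Section Update.
Variables (T S : finType).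
Implicit Types (c : {ffun T -> S}) (x : T) (a : S).

Definition upd c x a : {ffun T -> S} := [ffun y => if y == x then a else c y].

Lemma upd_at c x a : upd c x a x = a.
Proof. by rewrite ffunE eqxx. Qed.

Lemma upd_id c x : upd c x (c x) = c.
Proof. by apply/ffunP => y; rewrite ffunE; case: eqVneq => [->|]. Qed.

Lemma upd_upd c x a b : upd (upd c x a) x b = upd c x b.
Proof. by apply/ffunP => y; rewrite !ffunE; case: eqP. Qed.

Lemma upd_other c x a y : y != x -> upd c x a y = c y.
Proof. by rewrite ffunE => /negbTE ->. Qed.

Lemma sum_upd x (F : {ffun T -> S} -> nat) :
  \sum_c \sum_a F (upd c x a) = #|S| * \sum_c F c.
Proof.
pose swap (p : {ffun T -> S} * S) := (upd p.1 x p.2, p.1 x).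
have swapK : involutive swap.
  by case=> c a; rewrite /swap /= upd_upd upd_id upd_at.
rewrite pair_bigA (reindex_inj (inv_inj swapK)) /=.
under eq_bigr => p _ do rewrite upd_upd upd_id.
rewrite -(pair_bigA _ (fun c _ => F c)) big_distrr /=.
by apply: eq_bigr => c _; rewrite sum_nat_const mulnC.
Qed.
End Update.
Arguments upd {T S}.
Arguments sum_upd {T S}.

Section Strategies.
Variables (T : finType) (e : rel T) (q : nat).
Implicit Types (f : strategy T q) (g : T -> nat).

Lemma strategy_localP f :
  reflect (forall x (c1 c2 : {ffun T -> 'I_q}), (forall w, e x w -> c1 w = c2 w) ->
             f x c1 = f x c2)
          (strategy_local e f).
Proof.
apply: (iffP forallP) => [f_loc x c1 c2 c12 | f_loc x].
  have /forallP/(_ c1)/forallP/(_ c2)/implyP f_loc_x := f_loc x.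
  by apply/eqP/f_loc_x/forallP => w; apply/implyP => /c12 ->.
apply/forallP => c1; apply/forallP => c2; apply/implyP => /forallP c12.
by apply/eqP/f_loc => w /(implyP (c12 w))/eqP.
Qed.

Lemma strategy_boundedP g f :
  reflect (forall x (c : {ffun T -> 'I_q}), #|f x c| <= g x) (strategy_bounded g f).
Proof. by apply: (iffP forallP) => [f_bnd x | f_bnd x]; apply/forallP. Qed.

Lemma strategy_winsP f :
  reflect (forall c : {ffun T -> 'I_q}, exists x, c x \in f x c) (strategy_wins f).
Proof. by apply: (iffP forallP) => [f_win c | f_win c]; apply/existsP. Qed.

Hypothesis e_irr : irreflexive e.

(* Locality makes the guess of x blind to c x, so x is right for exactly a
   #|f x c| / q fraction of the colourings. *)
Lemma card_correct_guesses g f x : strategy_local e f -> strategy_bounded g f ->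
  q * \sum_(c : {ffun T -> 'I_q}) (c x \in f x c) <= g x * #|{ffun T -> 'I_q}|.
Proof.
move=> /strategy_localP f_loc /strategy_boundedP f_bnd.
rewrite -{1}[q]card_ord -(sum_upd x (fun c => c x \in f x c)) mulnC -sum_nat_const.
apply: leq_sum => c _; apply: leq_trans (f_bnd x c); rewrite card_sum_mem.
apply: eq_leq; apply: eq_bigr => a _; rewrite upd_at; congr (nat_of_bool (_ \in _)).
rewrite (f_loc x (upd c x a) c) // => w xw; apply: upd_other.
by apply: contraTneq xw => ->; rewrite e_irr.
Qed.

Lemma has_winning_leq_sum g : 0 < q -> has_winning e g q -> q <= \sum_x g x.
Proof.
move=> q_gt0 /existsP[f /and3P[f_loc f_bnd /strategy_winsP f_win]].
pose C := {ffun T -> 'I_q}.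
have C_gt0 : 0 < #|C| by rewrite card_ffun card_ord expn_gt0 q_gt0.
rewrite -(leq_pmul2r C_gt0) big_distrl /=.
apply: (@leq_trans (\sum_x q * \sum_(c : C) (c x \in f x c))).
  rewrite -big_distrr leq_mul2l -sum1_card exchange_big /=; apply/orP; right.
  apply: leq_sum => c _; have [x cx] := f_win c.
  by rewrite (bigD1 x) //= cx.
by apply: leq_sum => x _; apply: card_correct_guesses.
Qed.

Lemma leq_HG g : 0 < q -> has_winning e g q -> q <= HG e g.
Proof.
move=> q_gt0 win.
have q_small : q < (\sum_x g x).+1 by rewrite ltnS has_winning_leq_sum.
exact: (@leq_bigmax_cond _ _ _ (Ordinal q_small)).
Qed.

End Strategies.
Arguments leq_HG {T e q} e_irr {g}.
Arguments strategy_localP {T e q f}.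
Arguments strategy_boundedP {T q g f}.
Arguments strategy_winsP {T q f}.

Lemma HG_lt (T : finType) (e : rel T) (g : T -> nat) (q : nat) :
  0 < q -> (forall i, q <= i -> ~~ has_winning e g i) -> HG e g < q.
Proof.
move=> q_gt0 lose; rewrite /HG -(prednK q_gt0) ltnS.
apply/bigmax_leqP => i win; rewrite -ltnS prednK // ltnNge.
by apply: contraL win; apply: lose.
Qed.

Section DeleteVertex.
Variables (T : finType) (e : rel T) (v : T) (q : nat).
Hypotheses (e_sym : symmetric e) (e_irr : irreflexive e).
Variables (g : T -> nat) (g' : del_vertex v -> nat).
Hypothesis g'_eq : forall x : del_vertex v, ~~ e v (val x) -> g' x = g (val x).

Definition ext (c' : {ffun del_vertex v -> 'I_q}) (a : 'I_q) : {ffun T -> 'I_q} :=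
  [ffun x => if insub x is Some y then c' y else a].

Lemma ext_v c' a : ext c' a v = a.
Proof. by rewrite ffunE insubF // eqxx. Qed.

Lemma ext_val c' a y : ext c' a (val y) = c' y.
Proof. by rewrite ffunE valK. Qed.

Lemma ext_sub c' a {w} (wv : w != v) : ext c' a w = c' (exist _ w wv).
Proof. exact: (ext_val c' a (exist _ w wv)). Qed.

Lemma ext_other c' a b w : w != v -> ext c' a w = ext c' b w.
Proof. by move=> wv; rewrite !(ext_sub _ _ wv). Qed.

Definition neighbour_load : rat :=
  (\sum_(w : del_vertex v | e v (val w)) (g (val w))%:R / (g' w).+1%:R)%R.

Section Vote.
Variable f : strategy T q.
Hypotheses (f_loc : strategy_local e f) (f_bnd : strategy_bounded g f).

Definition votes (y : del_vertex v) c' b := #|[set a | b \in f (val y) (ext c' a)]|.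

(* y guesses b when f guesses b at y for more than g(y) q / (g'(y)+1) of the
   q colours of v; as f guesses at most g(y) q times in total, at most g'(y)
   colours pass this threshold. *)
Definition vote_strategy : strategy (del_vertex v) q :=
  [ffun y => [ffun c' => [set b | g (val y) * q < (g' y).+1 * votes y c' b]]].

Lemma vote_strategy_local : strategy_local (del_rel e v) vote_strategy.
Proof.
apply/strategy_localP => y c1 c2 c12; rewrite !ffunE; apply/setP => b.
rewrite !inE /votes; suff -> : [set a | b \in f (val y) (ext c1 a)] =
                             [set a | b \in f (val y) (ext c2 a)] by [].
apply/setP => a; rewrite !inE (elimT strategy_localP f_loc _ _ (ext c2 a)) // => w yw.
have [->|wv] := eqVneq w v; first by rewrite !ext_v.
by rewrite !(ext_sub _ _ wv); apply: c12.
Qed.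

Lemma vote_strategy_bounded : strategy_bounded g' vote_strategy.
Proof.
apply/strategy_boundedP => y c'; rewrite !ffunE -ltnS.
apply: card_heavy_lt => //; rewrite /votes sum_card_transpose.
apply: (@leq_trans (\sum_(a : 'I_q) g (val y))).
  by apply: leq_sum => a _; apply: (elimT strategy_boundedP f_bnd).
by rewrite sum_nat_const card_ord mulnC.
Qed.

Section DefeatedVote.
Variable c' : {ffun del_vertex v -> 'I_q}.
Hypothesis c'_defeats : forall y, c' y \notin vote_strategy y c'.

Definition correct_v := [set a | a \in f v (ext c' a)].
Definition correct_at y := [set a | c' y \in f (val y) (ext c' a)].

Lemma card_correct_v : #|correct_v| <= g v.
Proof.
have [->|[a0 _]] := set_0Vmem correct_v; first by rewrite cards0.
apply: leq_trans (elimT strategy_boundedP f_bnd v (ext c' a0)).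
apply/subset_leq_card/subsetP => a; rewrite inE.
rewrite (elimT strategy_localP f_loc _ _ (ext c' a0)) // => w vw.
by apply: ext_other; apply: contraTneq vw => ->; rewrite e_irr.
Qed.

Lemma card_correct_at y : (g' y).+1 * #|correct_at y| <= g (val y) * q.
Proof. by have := c'_defeats y; rewrite !ffunE inE -leqNgt. Qed.

(* Off N(v) the guess of y ignores the colour of v, so y is right for all q
   colours of v or for none; all would contradict card_correct_at, as
   g' y = g y there. *)
Lemma correct_at_nonadj y : 0 < q -> ~~ e v (val y) -> correct_at y = set0.
Proof.
move=> q_gt0 vy; apply/setP => a; rewrite !inE; apply/negP => ya.
have all_correct : correct_at y = setT.
  apply/setP => b; rewrite !inE (elimT strategy_localP f_loc _ _ (ext c' a)) // => w yw.
  by apply: ext_other; apply: contraTneq yw => ->; rewrite e_sym (negbTE vy).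
have := card_correct_at y; rewrite all_correct cardsT card_ord g'_eq //.
by rewrite leq_pmul2r // ltnn.
Qed.

Lemma card_correct_le_load : 0 < q ->
  ((#|correct_v| + \sum_(y | e v (val y)) #|correct_at y|)%:R
     <= q%:R * ((g v)%:R / q%:R + neighbour_load))%R.
Proof.
move=> q_gt0; have q_neq0 : (q%:R : rat) != 0%R by rewrite pnatr_eq0 -lt0n.
rewrite natrD natr_sum mulrDr mulrCA divff // mulr1 lerD ?ler_nat ?card_correct_v //.
rewrite /neighbour_load mulr_sumr; apply: ler_sum => y _.
rewrite mulrA ler_pdivlMr ?ltr0n // -!natrM ler_nat mulnC [q * _]mulnC.
exact: card_correct_at.
Qed.

Lemma escaping_colour : 0 < q -> ((g v)%:R / q%:R + neighbour_load < 1)%R ->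
  exists a, (a \notin correct_v) && [forall y, a \notin correct_at y].
Proof.
move=> q_gt0 load_lt1; apply/existsP; apply: contraT => /existsPn uncovered.
have cover a : a \notin correct_v -> exists y, a \in correct_at y.
  move=> av; have := uncovered a; rewrite av /= => /forallPn[y].
  by rewrite negbK; exists y.
have := card_cover cover; rewrite card_ord (bigID (fun y => e v (val y))) /=.
rewrite [X in _ + (_ + X)]big1 => [|y /(correct_at_nonadj _ q_gt0)->]; last first.
  by rewrite cards0.
rewrite addn0 -(ler_nat rat); move/le_trans/(_ (card_correct_le_load q_gt0)).
by rewrite -{1}[(q%:R : rat)]mulr1 ler_pM2l ?ltr0n // leNgt load_lt1.
Qed.
End DefeatedVote.

Lemma vote_strategy_wins : 0 < q -> ((g v)%:R / q%:R + neighbour_load < 1)%R ->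
  strategy_wins f -> strategy_wins vote_strategy.
Proof.
move=> q_gt0 load_lt1 /strategy_winsP f_win; apply/forallP => c'.
apply: contraT => /existsPn c'_defeats.
have [a /andP[av /forallP ay]] := escaping_colour _ c'_defeats q_gt0 load_lt1.
have [x] := f_win (ext c' a); have [->|xv] := eqVneq x v.
  by rewrite inE in av; rewrite ext_v (negbTE av).
have := ay (exist _ x xv); rewrite inE => /negbTE xa.
by rewrite (ext_sub _ _ xv) xa.
Qed.
End Vote.

Lemma has_winning_del_vertex : 0 < q ->
  ((g v)%:R / q%:R + neighbour_load < 1)%R ->
  has_winning e g q -> has_winning (del_rel e v) g' q.
Proof.
move=> q_gt0 load_lt1 /existsP[f /and3P[f_loc f_bnd f_win]].
apply/existsP; exists (vote_strategy f).
by rewrite vote_strategy_local ?vote_strategy_bounded ?vote_strategy_wins.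
Qed.
End DeleteVertex.
Arguments neighbour_load {T} e v g g'.
Arguments has_winning_del_vertex {T e v q} e_sym e_irr {g g'}.

Theorem proposition2p1 (T : finType) (e : rel T)
  (e_sym : symmetric e) (e_irr : irreflexive e)
  (g : T -> nat) (g_pos : forall x, 0 < g x) (v : T)
  (g' : del_vertex v -> nat) (g'_pos : forall x, 0 < g' x)
  (g'_eq : forall x : del_vertex v, ~~ e v (val x) -> g' x = g (val x))
  (q : nat) (hq : HG (del_rel e v) g' < q)
  (hsum : (((g v)%:R : rat) / q%:R
           + \sum_(w : del_vertex v | e v (val w)) (g (val w))%:R / (g' w).+1%:R
           < 1)%R) :
  HG e g < q.
Proof.
have q_gt0 : 0 < q by apply: leq_trans hq.
have del_irr : irreflexive (del_rel e v) by move=> x; apply: e_irr.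
apply: HG_lt => // i le_qi; have i_gt0 : 0 < i := leq_trans q_gt0 le_qi.
have load_lt1 : ((g v)%:R / i%:R + neighbour_load e v g g' < 1)%R.
  apply: le_lt_trans hsum; rewrite lerD2r ler_wpM2l //.
  by rewrite lef_pV2 ?posrE ?ltr0n // ler_nat.
apply/negP => /(has_winning_del_vertex e_sym e_irr g'_eq i_gt0 load_lt1).
by move=> /(leq_HG del_irr i_gt0) /(leq_trans le_qi) /(leq_trans hq); rewrite ltnn.
Qed.
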